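(* Let $n \geq 1$ and let $f:\{1,\ldots,n\}\to\{1,\ldots,n\}$ be any (total) function. Then there exists a well-formed compact-notation word $w$ over the points $\{1,\ldots,n\}$ (as defined in the context) such that $\mathcal{I}(w)=f$, i.e.\ every transformation of $\{1,\ldots,n\}$ can be written in the compact notation.
   Context: Compact notation. Fix $n\ge 1$. Words are over the terminal symbols \texttt{[}, \texttt{]}, \texttt{(}, \texttt{)}, \texttt{,}, \texttt{|} and symbols for the points $1,\ldots,n$. They are generated by the context-free grammar with start symbol $S$ and nonterminals $C$ (components), $N$ (nontrivial trees), $T$ (trees), $P$ (points): $S \to C^+ \mid \texttt{()}$; $C \to \texttt{(}\,T_1\texttt{,}T_2\texttt{,}\ldots\texttt{,}T_k\,\texttt{)}$ with $k\ge 2$, or $C\to N$; $N \to \texttt{[}\,T_1\texttt{,}\ldots\texttt{,}T_k\,\texttt{|}\,P\,\texttt{]}$ with $k\ge 2$ (a ``splat''), or $N \to \texttt{[}\,T_1\texttt{,}\ldots\texttt{,}T_k\,\texttt{]}$ with $k\ge 2$ (a ``conveyor belt''); $T \to N \mid P$; $P \to 1\mid 2\mid\cdots\mid n$. A word is well-formed if it is generated by this grammar and each point $1,\ldots,n$ occurs in it at most once. Semantics. Maps are represented as sets of pairs $(p,q)$ meaning $p\mapsto q$. The root of a tree is defined by $r(p)=p$ for a point $p$, $r(\texttt{[}T_1\texttt{,}\ldots\texttt{,}T_k\texttt{|}p\texttt{]})=p$, and $r(\texttt{[}T_1\texttt{,}\ldots\texttt{,}T_k\texttt{]})=r(T_k)$.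 Interpretation $\mathcal{I}$: for a point, $\mathcal{I}(P)=\varnothing$; for a splat, $\mathcal{I}(\texttt{[}T_1\texttt{,}\ldots\texttt{,}T_k\texttt{|}p\texttt{]})=\bigcup_{i=1}^k\mathcal{I}(T_i)\cup\{(r(T_i),p):1\le i\le k\}$; for a conveyor belt, $\mathcal{I}(\texttt{[}T_1\texttt{,}\ldots\texttt{,}T_k\texttt{]})=\bigcup_{i=1}^k\mathcal{I}(T_i)\cup\{(r(T_i),r(T_{i+1})):1\le i<k\}$; for a cycle component, $\mathcal{I}(\texttt{(}T_1\texttt{,}\ldots\texttt{,}T_k\texttt{)})=\bigcup_{i=1}^k\mathcal{I}(T_i)\cup\{(r(T_i),r(T_{i+1})):1\le i<k\}\cup\{(r(T_k),r(T_1))\}$; a component $C\to N$ has $\mathcal{I}(C)=\mathcal{I}(N)$. For the whole word: $\mathcal{I}(\texttt{()})$ is the identity map of $\{1,\ldots,n\}$, and if $w = C_1\cdots C_k$ then $\mathcal{I}(w)=\bigcup_{i=1}^k\mathcal{I}(C_i)\cup\{(p,p): p\in\{1,\ldots,n\}\text{ has no image in any }\mathcal{I}(C_i)\}$. For a well-formed word this set of pairs is the graph of a total function $\{1,\ldots,n\}\to\{1,\ldots,n\}$, which is identified with $\mathcal{I}(w)$. *)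

From mathcomp Require Import all_boot.
Set Implicit Arguments. Unset Strict Implicit. Unset Printing Implicit Defensive.

(* Trees T (nonterminal T): a point P, a splat [T1,...,Tk|p], or a conveyor
   belt [T1,...,Tk].  (The k >= 2 condition is part of well-formedness.) *)
Inductive tree : Type :=
| Pt of nat
| Splat of seq tree & nat
| Belt of seq tree.

(* Components C: a cycle (T1,...,Tk) or a nontrivial tree N. *)
Inductive comp : Type :=
| Cyc of seq tree
| Nt of tree.

(* Words S: either "()" or a nonempty sequence of components. *)
Inductive word : Type :=
| WId
| WComps of seq comp.

Fixpoint root (t : tree) : nat :=
  match t with
  | Pt p => p
  | Splat _ p => p
  | Belt ts =>
      (fix lastroot (ts : seq tree) : nat :=
         match ts with
         | [::] => 0
         | [:: t'] => root t'
         | _ :: ts' => lastroot ts'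
         end) ts
  end.

Fixpoint consec (s : seq nat) : seq (nat * nat) :=
  match s with
  | x :: ((y :: _) as s') => (x, y) :: consec s'
  | _ => [::]
  end.

(* Interpretation of a tree as a set (list) of pairs (p, q) meaning p |-> q *)
Fixpoint itree (t : tree) : seq (nat * nat) :=
  match t with
  | Pt _ => [::]
  | Splat ts p =>
      (fix go (ts : seq tree) : seq (nat * nat) :=
         match ts with
         | [::] => [::]
         | t' :: ts' => itree t' ++ (root t', p) :: go ts'
         end) ts
  | Belt ts =>
      (fix go (ts : seq tree) : seq (nat * nat) :=
         match ts with
         | [::] => [::]
         | t' :: ts' => itree t' ++ go ts'
         end) ts ++ consec (map root ts)
  end.

Definition icomp (c : comp) : seq (nat * nat) :=
  match c with
  | Cyc ts =>
      flatten (map itree ts) ++ consec (map root ts)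
        ++ [:: (root (last (Pt 0) ts), root (head (Pt 0) ts))]
  | Nt t => itree t
  end.

Definition interp_word (n : nat) (w : word) : seq (nat * nat) :=
  match w with
  | WId => [seq (p, p) | p <- iota 1 n]
  | WComps cs =>
      let P := flatten (map icomp cs) in
      P ++ [seq (p, p) | p <- iota 1 n & p \notin map fst P]
  end.

Fixpoint pts (t : tree) : seq nat :=
  match t with
  | Pt p => [:: p]
  | Splat ts p =>
      (fix go (ts : seq tree) : seq nat :=
         match ts with [::] => [::] | t' :: ts' => pts t' ++ go ts' end) ts
        ++ [:: p]
  | Belt ts =>
      (fix go (ts : seq tree) : seq nat :=
         match ts with [::] => [::] | t' :: ts' => pts t' ++ go ts' end) ts
  end.

Definition cpts (c : comp) : seq nat :=
  match c with Cyc ts => flatten (map pts ts) | Nt t => pts t end.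

Definition wpts (w : word) : seq nat :=
  match w with WId => [::] | WComps cs => flatten (map cpts cs) end.

Definition is_point (n p : nat) : bool := (1 <= p <= n).

Fixpoint gtree (n : nat) (t : tree) : bool :=
  match t with
  | Pt p => is_point n p
  | Splat ts p =>
      [&& 2 <= size ts,
          (fix go (ts : seq tree) : bool :=
             match ts with [::] => true | t' :: ts' => gtree n t' && go ts' end) ts
        & is_point n p]
  | Belt ts =>
      (2 <= size ts) &&
      (fix go (ts : seq tree) : bool :=
         match ts with [::] => true | t' :: ts' => gtree n t' && go ts' end) ts
  end.

Definition gcomp (n : nat) (c : comp) : bool :=
  match c with
  | Cyc ts => (2 <= size ts) && all (gtree n) ts
  | Nt t => (if t is Pt _ then false else true) && gtree n t
  end.

Definition gword (n : nat) (w : word) : bool :=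
  match w with
  | WId => true
  | WComps cs => (0 < size cs) && all (gcomp n) cs
  end.

Definition well_formed (n : nat) (w : word) : bool :=
  gword n w && uniq (wpts w).

From Pilot Require Import Defs.
From mathcomp Require Import all_boot zify.
Set Implicit Arguments. Unset Strict Implicit. Unset Printing Implicit Defensive.

(* The functional graph of f is a union of cycles with trees hanging from their
   points. Call x cyclic if it recurs within n steps (by pigeonhole, f^n x always
   is) and let height x be the number of steps x needs to reach a cyclic point.
   The non-cyclic preimages of q have height one more than q, so the trees built
   recursively from them (a splat, or a conveyor belt for a single preimage) are
   pairwise disjoint and have distinct points. A cycle of length at least two,
   listed from its least point, becomes a cycle component of the trees of its
   points; a fixed point with preimages becomes the tree hanging from it; all
   remaining fixed points are left to the identity default. *)

Lemma uniq_flatten_map (T U : eqType) (g : T -> seq U) (s : seq T) :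
  uniq s -> {in s, forall x, uniq (g x)} ->
  (forall x y z, x \in s -> y \in s -> z \in g x -> z \in g y -> x = y) ->
  uniq (flatten (map g s)).
Proof.
elim: s => [|x s IHs] //= /andP[xNs s_uniq] g_uniq g_disj.
rewrite cat_uniq g_uniq ?mem_head //= IHs //; last 2 first.
- by move=> y ys; apply: g_uniq; rewrite inE ys orbT.
- by move=> y y' z ys y's; apply: g_disj; rewrite inE ?ys ?y's orbT.
rewrite andbT; apply/hasPn => z /flatten_mapP[y ys zy]; apply/negP => zx.
have xy : x = y by apply: (g_disj x y z); rewrite ?inE ?eqxx ?ys ?orbT.
by rewrite xy ys in xNs.
Qed.

Lemma pts_Splat ts p : pts (Splat ts p) = flatten (map pts ts) ++ [:: p].
Proof. by rewrite /=; congr (_ ++ _); elim: ts => //= t ts ->. Qed.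

Lemma itree_Splat ts p :
  itree (Splat ts p) = flatten [seq itree t ++ [:: (Defs.root t, p)] | t <- ts].
Proof. by elim: ts => //= t ts ->; rewrite -catA. Qed.

Lemma gtree_Splat m ts p :
  gtree m (Splat ts p) = [&& 2 <= size ts, all (gtree m) ts & is_point m p].
Proof. by rewrite /=; do 2 f_equal; elim: ts => //= t ts ->. Qed.

Lemma root_last ts : Defs.root (last (Pt 0) ts) = last 0 (map Defs.root ts).
Proof. by rewrite -(last_map Defs.root). Qed.

Lemma consec_traject (f : nat -> nat) x k :
  consec (traject f x k.+1) = [seq (y, f y) | y <- traject f x k].
Proof. by elim: k x => //= k IHk x; rewrite -IHk. Qed.

Section Transformation.

Variables (n : nat) (f : nat -> nat).
Hypothesis f_point : forall p, is_point n p -> is_point n (f p).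

Lemma iter_point k x : is_point n x -> is_point n (iter k f x).
Proof. by move=> x_pt; elim: k => //= k; apply: f_point. Qed.

(* Pigeonhole: the n + 1 points x, f x, ..., f^n x cannot be distinct. *)
Lemma looping_point x : is_point n x -> looping f x n.
Proof.
move=> x_pt; rewrite -[looping _ _ _]negbK -looping_uniq; apply/negP => t_uniq.
have sub : {subset traject f x n.+1 <= iota 1 n}.
  by move=> _ /trajectP[i _ ->]; rewrite mem_iota add1n ltnS; apply: iter_point.
by have := uniq_leq_size t_uniq sub; rewrite size_traject size_iota ltnn.
Qed.

Definition cyclic x := x \in traject f (f x) n.

Lemma cyclic_iterS k x : is_point n x -> iter k.+1 f x = x -> cyclic x.
Proof.
move=> x_pt fx; have := loopingP (looping_point (f_point x_pt)) k.
by rewrite -iterSr fx.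
Qed.

Lemma cyclic_f x : cyclic x -> cyclic (f x).
Proof.
move=> /trajectP[i lt_in xE]; apply/trajectP; exists i => //.
by rewrite -iterSr iterS -xE.
Qed.

Lemma cyclic_iter k x : cyclic x -> cyclic (iter k f x).
Proof. by move=> x_cyc; elim: k => //= k; apply: cyclic_f. Qed.

Lemma cyclic_iter_n x : is_point n x -> cyclic (iter n f x).
Proof.
move=> x_pt; have /trajectP[i lt_in fnx] := looping_point x_pt.
rewrite fnx; apply: (@cyclic_iterS (n - i.+1)); first exact: iter_point.
by rewrite -iterD subnSK // subnK 1?ltnW.
Qed.

Definition period x := (index x (traject f (f x) n)).+1.
Definition orbit x := traject f x (period x).

Lemma period_le x : cyclic x -> period x <= n.
Proof. by move=> x_cyc; rewrite -[n in _ <= n](size_traject f (f x)) index_mem. Qed.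

Lemma iter_period x : cyclic x -> iter (period x) f x = x.
Proof. by move=> x_cyc; rewrite iterSr -(nth_traject f (period_le x_cyc)) nth_index. Qed.

Lemma period1 x : ~~ (1 < period x) -> period x = 1.
Proof. by rewrite /period -leqNgt ltnS leqn0 => /eqP->. Qed.

Lemma orbit_period1 x : period x = 1 -> orbit x = [:: x].
Proof. by rewrite /orbit => ->. Qed.

Lemma period1_fixed x : cyclic x -> period x = 1 -> f x = x.
Proof. by move=> x_cyc x1; rewrite -[f x]/(iter 1 f x) -x1 iter_period. Qed.

Lemma size_orbit x : size (orbit x) = period x.
Proof. exact: size_traject. Qed.

Lemma orbit_uniq x : cyclic x -> uniq (orbit x).
Proof.
move=> x_cyc; rewrite /orbit /period looping_uniq; apply/trajectP => -[j lt_j iE].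
have : x \in take j.+1 (traject f (f x) n).
  rewrite take_traject; last by have := period_le x_cyc; rewrite /period; lia.
  by apply/trajectP; exists j => //; rewrite -iterSr iterS -iE -iterS iter_period.
by move/index_ltn; lia.
Qed.

Lemma mem_orbit x y : cyclic x -> reflect (exists k, y = iter k f x) (y \in orbit x).
Proof.
move=> x_cyc; apply: (iffP idP) => [/trajectP[k _ ->] | [k ->]]; first by exists k.
apply: loopingP; rewrite /looping iter_period //; exact: mem_head.
Qed.

Lemma orbit_cyclic x y : cyclic x -> y \in orbit x -> cyclic y.
Proof. by move=> x_cyc /(mem_orbit _ x_cyc)[k ->]; apply: cyclic_iter. Qed.

Lemma orbit_sym x y : cyclic x -> y \in orbit x -> x \in orbit y.
Proof.
move=> x_cyc /trajectP[k lt_k ->]; apply/mem_orbit; first exact: cyclic_iter.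
by exists (period x - k); rewrite -iterD subnK ?iter_period // ltnW.
Qed.

Lemma orbit_trans x y z : cyclic x -> y \in orbit x -> z \in orbit y -> z \in orbit x.
Proof.
move=> x_cyc /(mem_orbit _ x_cyc)[k ->] /mem_orbit -/(_ (cyclic_iter k x_cyc))[l ->].
by apply/mem_orbit => //; exists (l + k); rewrite iterD.
Qed.

Lemma orbit_point x y : is_point n x -> y \in orbit x -> is_point n y.
Proof. by move=> x_pt /trajectP[k _ ->]; apply: iter_point. Qed.

Definition cycle_rep c := cyclic c && all (leq c) (orbit c).

Lemma cycle_rep_unique c1 c2 y : cycle_rep c1 -> cycle_rep c2 ->
  y \in orbit c1 -> y \in orbit c2 -> c1 = c2.
Proof.
move=> /andP[c1_cyc /allP c1_min] /andP[c2_cyc /allP c2_min] y1 y2.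
apply/eqP; rewrite eqn_leq c1_min ?c2_min //.
  by apply: orbit_trans y2 (orbit_sym c1_cyc y1).
by apply: orbit_trans y1 (orbit_sym c2_cyc y2).
Qed.

Lemma cycle_rep_exists y : cyclic y -> exists2 c, cycle_rep c & y \in orbit c.
Proof.
move=> y_cyc; have y_y : y \in orbit y by apply/mem_orbit => //; exists 0.
have [c c_y c_min] := ex_minnP (ex_intro (fun c => c \in orbit y) y y_y).
have c_cyc : cyclic c := orbit_cyclic y_cyc c_y.
exists c; last exact: orbit_sym.
by apply/andP; split => //; apply/allP => z z_c; apply: c_min; apply: orbit_trans z_c.
Qed.

Definition height x := find cyclic (traject f x n.+1).

Lemma has_cyclic_traject x : is_point n x -> has cyclic (traject f x n.+1).
Proof.
by move=> x_pt; apply/hasP; exists (iter n f x); [apply/trajectP; exists n | apply: cyclic_iter_n].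
Qed.

Lemma height_le x : is_point n x -> height x <= n.
Proof.
by move=> /has_cyclic_traject; rewrite has_find size_traject.
Qed.

Lemma cyclic_iter_height x : is_point n x -> cyclic (iter (height x) f x).
Proof.
move=> x_pt; have := nth_find x (has_cyclic_traject x_pt).
by rewrite nth_traject // ltnS height_le.
Qed.

Lemma height_min x i : i < height x -> ~~ cyclic (iter i f x).
Proof.
move=> lt_i; have := before_find x lt_i; rewrite nth_traject => [->//|].
by apply: leq_trans lt_i _; rewrite -[n.+1](size_traject f x) find_size.
Qed.

Lemma height_unique x h : is_point n x -> cyclic (iter h f x) ->
  (forall i, i < h -> ~~ cyclic (iter i f x)) -> height x = h.
Proof.
move=> x_pt h_cyc h_min; case: (ltngtP (height x) h) => [lt_xh|lt_hx|//].
  by have := h_min _ lt_xh; rewrite cyclic_iter_height.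
by have := height_min lt_hx; rewrite h_cyc.
Qed.

Lemma height_cyclic x : cyclic x -> height x = 0.
Proof. by rewrite /height /= => ->. Qed.

Lemma height_f x : is_point n x -> ~~ cyclic x -> height x = (height (f x)).+1.
Proof.
move=> x_pt x_ncyc; apply: height_unique => //.
  by rewrite iterSr; apply: cyclic_iter_height; apply: f_point.
by case=> // i; rewrite ltnS iterSr; apply: height_min.
Qed.

Definition children q := [seq p <- iota 1 n | (f p == q) && ~~ cyclic p].

Lemma mem_children p q : (p \in children q) = [&& is_point n p, f p == q & ~~ cyclic p].
Proof. by rewrite mem_filter mem_iota add1n ltnS andbC. Qed.

(* Cut at depth m; depth n suffices by height_le. Splats need at least two
   branches, so a single child p hangs as the belt [T_p; q]. *)
Fixpoint tree_of m q : tree :=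
  if m is m'.+1 then
    match children q with
    | [::] => Pt q
    | [:: p] => Belt [:: tree_of m' p; Pt q]
    | ps => Splat (map (tree_of m') ps) q
    end
  else Pt q.

Lemma root_tree_of m q : Defs.root (tree_of m q) = q.
Proof. by case: m => //= m; case: (children q) => [|p [|p' ps]]. Qed.

Lemma tree_ofS m q : tree_of m.+1 q =
  match children q with
  | [::] => Pt q
  | [:: p] => Belt [:: tree_of m p; Pt q]
  | ps => Splat (map (tree_of m) ps) q
  end.
Proof. by []. Qed.

Lemma pts_tree_ofS m q :
  pts (tree_of m.+1 q) = flatten [seq pts (tree_of m p) | p <- children q] ++ [:: q].
Proof.
rewrite tree_ofS; case: (children q) => [|p [|p' ps]]; first by [].
  by rewrite /= cats0.
by rewrite pts_Splat -map_comp.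
Qed.

Lemma itree_tree_ofS m q : itree (tree_of m.+1 q) =
  flatten [seq itree (tree_of m p) ++ [:: (p, q)] | p <- children q].
Proof.
rewrite tree_ofS; case: (children q) => [|p [|p' ps]]; first by [].
  by rewrite /= root_tree_of !cats0.
by rewrite itree_Splat -map_comp; congr flatten; apply: eq_map => t /=; rewrite root_tree_of.
Qed.

Lemma tree_of_sound m q a b : (a, b) \in itree (tree_of m q) -> is_point n a /\ b = f a.
Proof.
elim: m q => [//|m IHm] q; rewrite itree_tree_ofS => /flatten_mapP[p].
rewrite mem_children => /and3P[p_pt /eqP fp _]; rewrite mem_cat inE.
by case/orP => [/IHm // | /eqP[-> ->]].
Qed.

Lemma mem_pts_tree_of m q z : is_point n q -> z \in pts (tree_of m q) ->
  is_point n z /\ exists2 j, iter j f z = q & height z = j + height q.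
Proof.
elim: m q => [|m IHm] q q_pt; first by rewrite inE => /eqP->; split; last exists 0.
rewrite pts_tree_ofS mem_cat inE => /orP[/flatten_mapP[p] | /eqP->]; last first.
  by split; last exists 0.
rewrite mem_children => /and3P[p_pt /eqP fp p_ncyc] /IHm[//|z_pt [j zp hz]].
split=> //; exists j.+1; first by rewrite iterS zp.
by rewrite hz (height_f p_pt p_ncyc) fp addnS.
Qed.

Lemma tree_of_disjoint m q1 q2 z : is_point n q1 -> is_point n q2 ->
  height q1 = height q2 -> z \in pts (tree_of m q1) -> z \in pts (tree_of m q2) ->
  q1 = q2.
Proof.
move=> q1_pt q2_pt hq /(mem_pts_tree_of q1_pt)[_ [j1 zq1 h1]].
move=> /(mem_pts_tree_of q2_pt)[_ [j2 zq2 h2]].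
have : j1 + height q1 = j2 + height q2 by rewrite -h1 -h2.
by rewrite hq => /addIn eq_j; rewrite -zq1 -zq2 eq_j.
Qed.

Lemma tree_of_uniq m q : is_point n q -> uniq (pts (tree_of m q)).
Proof.
elim: m q => [//|m IHm] q q_pt.
rewrite pts_tree_ofS cat_uniq [uniq [:: q]]/= andbT has_seq1.
have height_child p : p \in children q -> height p = (height q).+1.
  by rewrite mem_children => /and3P[p_pt /eqP <- p_ncyc]; apply: height_f.
apply/andP; split.
  apply: uniq_flatten_map; first exact/filter_uniq/iota_uniq.
    by move=> p; rewrite mem_children => /and3P[p_pt _ _]; apply: IHm.
  move=> p1 p2 z p1q p2q; apply: tree_of_disjoint.
  - by move: p1q; rewrite mem_children => /and3P[].
  - by move: p2q; rewrite mem_children => /and3P[].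
  - by rewrite (height_child p1 p1q) (height_child p2 p2q).
apply/flatten_mapP => -[p pq].
move: (pq); rewrite mem_children => /and3P[p_pt _ _].
by move=> /(mem_pts_tree_of p_pt)[_ [j _]]; rewrite (height_child p pq); lia.
Qed.

Lemma tree_of_complete m q a j : is_point n a -> iter j f a = q ->
  height a = j + height q -> 0 < j <= m -> (a, f a) \in itree (tree_of m q).
Proof.
elim: m q j => [|m IHm] q [|j] // a_pt aq ha /andP[_ le_jm]; rewrite itree_tree_ofS.
have p_ch : iter j f a \in children q.
  rewrite mem_children iter_point //= -iterS aq eqxx /=.
  by apply: height_min; rewrite ha addSn ltnS leq_addr.
apply/flatten_mapP; exists (iter j f a) => //; rewrite mem_cat inE.
case: j => [|j] in aq ha le_jm p_ch *; first by rewrite -aq eqxx orbT.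
apply/orP; left; apply: IHm => //.
move: p_ch; rewrite mem_children => /and3P[p_pt /eqP fp p_ncyc].
by rewrite ha (height_f p_pt p_ncyc) fp addnS.
Qed.

Lemma gtree_tree_of m q : is_point n q -> gtree n (tree_of m q).
Proof.
elim: m q => [//|m IHm] q q_pt; rewrite tree_ofS.
have : all (is_point n) (children q).
  by apply/allP => p; rewrite mem_children => /and3P[].
case: (children q) => [|p [|p' ps]]; [by [] | by rewrite /= q_pt !andbT => /IHm |].
move=> ps_pt; rewrite gtree_Splat size_map all_map; apply/and3P; split=> //.
by apply/allP => t /(allP ps_pt); apply: IHm.
Qed.

Lemma itree_tree_of_leaf m q : children q = [::] -> itree (tree_of m q) = [::].
Proof. by case: m => // m; rewrite tree_ofS => ->. Qed.

Lemma map_root_tree_of m s : map Defs.root (map (tree_of m) s) = s.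
Proof. by rewrite -map_comp (eq_map (root_tree_of m)) map_id. Qed.

Lemma icomp_orbit m c : cyclic c ->
  icomp (Cyc (map (tree_of m) (orbit c))) =
  flatten [seq itree (tree_of m y) | y <- orbit c] ++ [seq (y, f y) | y <- orbit c].
Proof.
move=> c_cyc; rewrite /icomp -map_comp root_last !map_root_tree_of; congr (_ ++ _).
have := iter_period c_cyc; rewrite /orbit /period; move: (index _ _) => k fkc.
rewrite consec_traject [in RHS]trajectSr map_rcons -cats1 /=.
by rewrite last_traject root_tree_of -iterS fkc.
Qed.

Definition cycle_comp c :=
  if 1 < period c then Cyc (map (tree_of n) (orbit c)) else Nt (tree_of n c).

(* A fixed point without children would be the forbidden component Pt c; it is left
   to the identity default instead. *)
Definition cycle_reps :=
  [seq c <- iota 1 n | cycle_rep c && ((1 < period c) || (children c != [::]))].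

Definition comps := map cycle_comp cycle_reps.

Lemma mem_cycle_reps c : c \in cycle_reps =
  [&& is_point n c, cycle_rep c & (1 < period c) || (children c != [::])].
Proof. by rewrite mem_filter mem_iota add1n ltnS andbC. Qed.

Lemma cycle_repsP c : c \in cycle_reps -> [/\ is_point n c, cyclic c & cycle_rep c].
Proof.
by rewrite mem_cycle_reps => /and3P[c_pt /andP[c_cyc c_min] _]; split=> //; apply/andP.
Qed.

Lemma cpts_cycle_comp c : cpts (cycle_comp c) = flatten [seq pts (tree_of n y) | y <- orbit c].
Proof.
rewrite /cycle_comp; case: ifP => [_ | /negbT/period1 c1]; first by rewrite /= -map_comp.
by rewrite orbit_period1 //= cats0.
Qed.

Lemma cycle_comp_sound c a b : is_point n c -> cyclic c ->
  (a, b) \in icomp (cycle_comp c) -> is_point n a /\ b = f a.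
Proof.
rewrite /cycle_comp => c_pt c_cyc; case: ifP => _; last exact: tree_of_sound.
rewrite icomp_orbit // mem_cat => /orP[/flatten_mapP[y _ /tree_of_sound] // |].
by case/mapP => y y_c [-> ->]; split=> //; apply: orbit_point y_c.
Qed.

Lemma comps_sound a b :
  (a, b) \in flatten (map icomp comps) -> is_point n a /\ b = f a.
Proof.
rewrite -map_comp => /flatten_mapP[c /cycle_repsP[c_pt c_cyc _]].
exact: cycle_comp_sound.
Qed.

Lemma tree_of_height a : is_point n a -> 0 < height a ->
  (a, f a) \in itree (tree_of n (iter (height a) f a)).
Proof.
move=> a_pt h_pos; apply: tree_of_complete => //; last by rewrite h_pos height_le.
by rewrite (height_cyclic (cyclic_iter_height a_pt)) addn0.
Qed.

Lemma cycle_comp_complete c a : is_point n a -> f a != a -> cyclic c ->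
  iter (height a) f a \in orbit c ->
  (a, f a) \in icomp (cycle_comp c) /\ (1 < period c) || (children c != [::]).
Proof.
move=> a_pt a_moved c_cyc; rewrite /cycle_comp.
case: ifP => [_ | /negbT/period1 c1] y_c.
  rewrite icomp_orbit // mem_cat; split=> //; apply/orP.
  case: (posnP (height a)) => [h0 | h_pos].
    by right; apply/mapP; exists a => //; rewrite h0 in y_c.
  by left; apply/flatten_mapP; exists (iter (height a) f a); last exact: tree_of_height.
move: y_c; rewrite orbit_period1 // inE => /eqP yc.
case: (posnP (height a)) => [h0 | h_pos].
  by move: yc a_moved; rewrite h0 /= => ->; rewrite period1_fixed ?eqxx.
have a_tree := tree_of_height a_pt h_pos; rewrite yc in a_tree.
split=> //; apply/orP; right; apply/eqP => c_leaf.
by rewrite itree_tree_of_leaf in a_tree.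
Qed.

Lemma comps_complete a : is_point n a -> f a != a ->
  (a, f a) \in flatten (map icomp comps).
Proof.
move=> a_pt a_moved; have y_cyc := cyclic_iter_height a_pt.
have [c c_rep y_c] := cycle_rep_exists y_cyc.
have c_cyc : cyclic c by case/andP: c_rep.
have c_pt : is_point n c.
  by apply: (orbit_point (iter_point _ a_pt)); apply: orbit_sym y_c.
have [a_c c_nontriv] := cycle_comp_complete a_pt a_moved c_cyc y_c.
rewrite -map_comp; apply/flatten_mapP; exists c => //.
by rewrite mem_cycle_reps c_pt c_rep.
Qed.

Lemma comps_uniq : uniq (flatten (map cpts comps)).
Proof.
have tree_disj c1 c2 y1 y2 z : c1 \in cycle_reps -> c2 \in cycle_reps ->
    y1 \in orbit c1 -> y2 \in orbit c2 ->
    z \in pts (tree_of n y1) -> z \in pts (tree_of n y2) -> y1 = y2.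
  move=> /cycle_repsP[c1_pt c1_cyc _] /cycle_repsP[c2_pt c2_cyc _] y1c y2c.
  apply: tree_of_disjoint; [exact: orbit_point y1c | exact: orbit_point y2c |].
  by rewrite (height_cyclic (orbit_cyclic c1_cyc y1c)) (height_cyclic (orbit_cyclic c2_cyc y2c)).
rewrite -map_comp (eq_map cpts_cycle_comp); apply: uniq_flatten_map.
- exact/filter_uniq/iota_uniq.
- move=> c cr; have [c_pt c_cyc _] := cycle_repsP cr.
  apply: uniq_flatten_map; first exact: orbit_uniq.
    by move=> y /(orbit_point c_pt); apply: tree_of_uniq.
  by move=> y1 y2 z; apply: tree_disj.
- move=> c1 c2 z c1r c2r /flatten_mapP[y1 y1c z1] /flatten_mapP[y2 y2c z2].
  have [[_ _ c1_rep] [_ _ c2_rep]] := (cycle_repsP c1r, cycle_repsP c2r).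
  have y12 := tree_disj c1 c2 y1 y2 z c1r c2r y1c y2c z1 z2.
  rewrite -y12 in y2c; exact: cycle_rep_unique c1_rep c2_rep y1c y2c.
Qed.

Lemma gcomp_comps : all (gcomp n) comps.
Proof.
rewrite all_map; apply/allP => c; rewrite mem_cycle_reps => /and3P[c_pt _].
rewrite /= /cycle_comp; case: ifP => [c_gt1 _ | _ /= c_ch]; apply/andP; split.
- by rewrite size_map size_orbit.
- by rewrite all_map; apply/allP => y y_c; apply/gtree_tree_of/(orbit_point c_pt).
- have [p p_ch] : exists p, p \in children c.
    by case: (children c) c_ch => [|p ps]; last exists p; rewrite ?mem_head.
  have n_gt0 : 0 < n.
    by move: p_ch; rewrite mem_children => /and3P[/andP[p_gt0 p_le] _ _]; apply: leq_trans p_le.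
  by rewrite -(prednK n_gt0) tree_ofS; case: (children c) c_ch => [|? []].
- exact: gtree_tree_of.
Qed.

Lemma mem_interp_WComps cs :
  (forall a b, (a, b) \in flatten (map icomp cs) -> is_point n a /\ b = f a) ->
  (forall a, is_point n a -> f a != a -> (a, f a) \in flatten (map icomp cs)) ->
  forall p q, (p, q) \in interp_word n (WComps cs) <-> is_point n p /\ q = f p.
Proof.
set P := flatten _ => sound complete p q; rewrite /= mem_cat -/P; split.
  case/orP=> [/sound // | /mapP[x]]; rewrite mem_filter mem_iota add1n ltnS.
  move=> /and3P[xNP x_gt0 x_le] [-> ->]; have x_pt : is_point n x by apply/andP.
  split=> //; have [// | x_moved] := eqVneq (f x) x.
  by rewrite (map_f fst (complete x x_pt x_moved)) in xNP.
move=> [p_pt ->]; have [fp | p_moved] := eqVneq (f p) p; last by rewrite complete.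
rewrite fp; have [/mapP[[a b] ab /= pa] | pNP] := boolP (p \in map fst P).
  have [_ ba] := sound a b ab.
  have -> : (p, p) = (a, b) by rewrite ba -pa fp.
  by rewrite ab.
by apply/orP; right; apply/mapP; exists p; rewrite // mem_filter mem_iota add1n ltnS pNP.
Qed.

Lemma interp_WId : interp_word n WId = interp_word n (WComps [::]).
Proof. by rewrite /= (@eq_filter _ _ predT) ?filter_predT. Qed.

Definition compact_word := if comps is [::] then WId else WComps comps.

Lemma well_formed_compact_word : well_formed n compact_word.
Proof.
rewrite /compact_word; case E: comps => [//|c cs]; rewrite -E.
by apply/andP; split; [apply/andP; split; [rewrite E | exact: gcomp_comps] | exact: comps_uniq].
Qed.

Lemma mem_interp_compact_word p q :
  (p, q) \in interp_word n compact_word <-> is_point n p /\ q = f p.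
Proof.
rewrite /compact_word; case E: comps => [|c cs]; [rewrite interp_WId -E | rewrite -E];
  exact: (mem_interp_WComps comps_sound comps_complete).
Qed.

End Transformation.

Theorem mainTheorem1 (n : nat) (f : nat -> nat) :
  1 <= n ->
  (forall p, 1 <= p <= n -> 1 <= f p <= n) ->
  exists w : word,
    well_formed n w /\
    (forall p q : nat, (p, q) \in interp_word n w <-> (1 <= p <= n /\ q = f p)).
Proof.
move=> _ f_point; exists (compact_word n f); split.
  exact: well_formed_compact_word.
exact: mem_interp_compact_word.
Qed.
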